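(* Assume Condition 1. Pick any $\pi\in\Pi$ and $t\ge t_1$. If $\bar V_t(\pi)>\theta K$, then \[\Delta_t(\pi)>2\sqrt{\frac{2\,\bar V_t(\pi)\,C_t}{t}}.\]
   Context: Contextual bandit setting: $A$ a set of $K$ actions, $X$ contexts, $\Pi$ a finite set of $N$ policies, $D$ a distribution over $(x,\vec r)\in X\times[0,1]^K$ with marginal $D_X$; $(x_t,\vec r_t)\sim D$ i.i.d., the learner observes $x_t$, picks $a_t$, sees only $r_t:=r_t(a_t)$. $\eta_D(\pi)=\mathbb{E}[r(\pi(x))]$, $\pi^*$ a maximizer. $W_P(x,a)=\sum_{\pi:\pi(x)=a}P(\pi)$. With history $((x_i,a_i,r_i,p_i))_{i\le t}$, $\eta_t(W)=\frac1t\sum_i r_iW(x_i,a_i)/p_i$ for randomized policies $W$, $\pi_t=\arg\max_\pi\eta_t(\pi)$, $\Delta_t(W)=\eta_t(\pi_t)-\eta_t(W)$; $\mathbb{E}_{x\sim h_{t-1}}$ is the average over $x_1,\dots,x_{t-1}$. Actions are chosen by RandomizedUCB$(\Pi,\delta,K)$: $C_t=2\log(Nt/\delta)$, $\mu_t=\min\{\frac1{2K},\sqrt{C_t/(2Kt)}\}$; $P_t$ is a distribution over $\Pi$ whose objective $\sum_\pi P(\pi)\Delta_{t-1}(\pi)$ is within $\epsilon_{\mathrm{opt},t}=O(\sqrt{KC_t/t})$ of the optimum of minimizing it subject to: for all distributions $Q$ over $\Pi$, $\mathbb{E}_{\pi\sim Q}\mathbb{E}_{x\sim h_{t-1}}[1/((1-K\mu_t)W_P(x,\pi(x))+\mu_t)]\le\max\{4K,(t-1)\Delta_{t-1}(W_Q)^2/(180C_{t-1})\}$,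 with each constraint satisfied up to additive slack $K$; $W'_t(a)=(1-K\mu_t)W_{P_t}(x_t,a)+\mu_t$, $a_t\sim W'_t$, $p_t=W'_t(a_t)$. Constants: $\epsilon\in(0,1)$ fixed, $\rho=7500/\epsilon^3$, $\theta=(\rho+1)/(1-(1+\epsilon)/2)$. $t_0$ is the first $t$ with $\mu_t=\sqrt{C_t/(2Kt)}$; $t_1=\lceil16K\log(8KN/\delta)\rceil$. $V_t(\pi)=K$ for $t\le t_0$ and $V_t(\pi)=K+\mathbb{E}_{x\sim D_X}[1/((1-K\mu_t)W_{P_t}(x,\pi(x))+\mu_t)]$ for $t>t_0$; $\bar V_t(\pi)=\max_{\tau\le t}V_\tau(\pi)$. Condition 1: (i) for all $\pi\in\Pi$ and $t\ge t_1$, $\mathbb{E}_{x\sim D_X}[1/((1-K\mu_t)W_{P_t}(x,\pi(x))+\mu_t)]\le(1+\epsilon)\mathbb{E}_{x\sim h_{t-1}}[1/((1-K\mu_t)W_{P_t}(x,\pi(x))+\mu_t)]+\rho K$; and (ii) for all $\pi,\pi'\in\Pi$ and $t\ge t_0$, $|(\eta_t(\pi)-\eta_t(\pi'))-(\eta_D(\pi)-\eta_D(\pi'))|\le2\sqrt{(\bar V_t(\pi)+\bar V_t(\pi'))C_t/t}$. *)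

From HB Require Import structures.
From mathcomp Require Import all_boot all_order all_algebra.
From mathcomp Require Import all_classical all_reals all_analysis.
Set Implicit Arguments. Unset Strict Implicit. Unset Printing Implicit Defensive.
Import Order.TTheory GRing.Theory Num.Theory.
Local Open Scope ring_scope.

(* Rounds are numbered 1, 2, 3, ...; round-i data are xs i, rs i (full reward
   vector, only rs i (acts i) is observed), acts i, ps i; Pt i = P_i. *)

Section Bandit.
Variables (R : realType) (X : Type) (K : nat) (Pi : finType)
          (pol : Pi -> X -> 'I_K).

Definition WP (P : {ffun Pi -> R}) (x : X) (a : 'I_K) : R :=
  \sum_(p : Pi | pol p x == a) P p.

(* a deterministic policy seen as a randomized policy *)
Definition Wdet (p : Pi) (x : X) (a : 'I_K) : R := (pol p x == a)%:R.

Definition is_dist (Q : {ffun Pi -> R}) : Prop :=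
  (forall p, 0 <= Q p) /\ \sum_(p : Pi) Q p = 1.

Definition eta_hat (xs : nat -> X) (rs : nat -> 'I_K -> R) (acts : nat -> 'I_K)
  (ps : nat -> R) (t : nat) (W : X -> 'I_K -> R) : R :=
  t%:R^-1 * \sum_(1 <= i < t.+1) rs i (acts i) * W (xs i) (acts i) / ps i.

(* Delta_t(W) = eta_t(pi_t) - eta_t(W), with pi_t = pit t an empirical maximizer *)
Definition Delta_hat xs rs acts ps (pit : nat -> Pi) (t : nat) (W : X -> 'I_K -> R) : R :=
  eta_hat xs rs acts ps t (Wdet (pit t)) - eta_hat xs rs acts ps t W.

Definition Eh (xs : nat -> X) (t : nat) (f : X -> R) : R :=
  t%:R^-1 * \sum_(1 <= i < t.+1) f (xs i).

Definition Ct (delta : R) (t : nat) : R := 2 * ln (#|Pi|%:R * t%:R / delta).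

Definition mut (delta : R) (t : nat) : R :=
  Num.min (1 / (2 * K%:R)) (Num.sqrt (Ct delta t / (2 * K%:R * t%:R))).

Definition invW (delta : R) (t : nat) (P : {ffun Pi -> R}) (p : Pi) (x : X) : R :=
  1 / ((1 - K%:R * mut delta t) * WP P x (pol p x) + mut delta t).

(* The constraint of the optimization problem at round t, with additive slack s:
   for all distributions Q,
   E_{pi~Q} E_{x~h_{t-1}}[1/((1-K mu_t)W_P(x,pi(x))+mu_t)]
     <= max{4K, (t-1) Delta_{t-1}(W_Q)^2 / (180 C_{t-1})} + s *)
Definition constraint_ok xs rs acts ps pit (delta : R) (t : nat)
  (s : R) (P : {ffun Pi -> R}) : Prop :=
  forall Q : {ffun Pi -> R}, is_dist Q ->
    \sum_(p : Pi) Q p * Eh xs t.-1 (invW delta t P p)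
      <= Num.max (4 * K%:R)
           ((t.-1)%:R * (Delta_hat xs rs acts ps pit t.-1 (WP Q)) ^+ 2
              / (180 * Ct delta t.-1)) + s.

Definition objective xs rs acts ps pit (t : nat) (P : {ffun Pi -> R}) : R :=
  \sum_(p : Pi) P p * Delta_hat xs rs acts ps pit t.-1 (Wdet p).

Section Population.
Variables (d : measure_display) (Omega : measurableType d)
          (PD : probability Omega R) (xD : Omega -> X) (rD : Omega -> 'I_K -> R).
(* (x, r) ~ D is modelled as (xD w, rD w) with w ~ PD. *)

Definition ED (f : X -> R) : R := \int[PD]_(w in setT) f (xD w).

Definition etaD (p : Pi) : R := \int[PD]_(w in setT) rD w (pol p (xD w)).

Definition Vt (delta : R) (t0 : nat) (Pt : nat -> {ffun Pi -> R}) (t : nat) (p : Pi) : R :=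
  if (t <= t0)%N then K%:R else K%:R + ED (invW delta t (Pt t) p).

Definition Vbar delta t0 Pt (t : nat) (p : Pi) : R :=
  \big[Num.max/Vt delta t0 Pt 1 p]_(1 <= tau < t.+1) Vt delta t0 Pt tau p.

End Population.
End Bandit.

From HB Require Import structures.
From mathcomp Require Import all_boot all_order all_algebra.
From mathcomp Require Import all_classical all_reals all_analysis.
From mathcomp Require Import ring lra zify.
Import Order.TTheory GRing.Theory Num.Theory.
Local Open Scope ring_scope.

(* Before the burn-in [mu_s] is so large that [V_s(pi) <= K + 1/mu_s <= theta K].
   After it, Condition 1(i) turns a value [V_tau(pi) > theta K] into
   [E_{h_{tau-1}}[1/W'] > V_tau(pi)/2], and the feasibility constraint of [P_tau]
   for the point mass on [pi] then gives
   [Delta_{tau-1}(pi)^2 >= 81 V_tau(pi) C_{tau-1}/(tau-1)].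
   By strong induction on [s], every policy with [Vbar_s(pi) > theta K] has
   population regret at least [6 sqrt(Vbar_s(pi) C_s/s)]: the induction
   hypothesis keeps [Vbar] of the optimal policy and of the empirical leader
   below [theta K], so Condition 1(ii) costs at most [3 sqrt(...)] out of
   [Delta_{tau-1}(pi) >= 9 sqrt(...)], and [C_s/s] is nonincreasing.
   Condition 1(ii) at time [t] for [pi] and the optimal policy gives the theorem. *)

Lemma le_of_sqr_le [R : realDomainType] [a b : R] :
  0 <= b -> a ^+ 2 <= b ^+ 2 -> a <= b.
Proof.
move=> b0 h; have [a0|a0] := leP 0 a; last exact: le_trans (ltW a0) b0.
by rewrite -(ler_pXn2r (n:=2)) ?nnegrE.
Qed.

Lemma lt_of_sqr_lt [R : realDomainType] [a b : R] :
  0 <= b -> a ^+ 2 < b ^+ 2 -> a < b.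
Proof.
move=> b0 h; have [a0|a0] := leP 0 a; last exact: lt_le_trans a0 b0.
by rewrite -(ltr_pXn2r (n:=2)) ?nnegrE.
Qed.

Lemma sqrt_mulr_le [R : rcfType] [a b y : R] :
  a <= b -> 0 <= y -> Num.sqrt (a * y) <= Num.sqrt (b * y).
Proof.
move=> ab y0; have [a0|a0] := leP 0 a.
  by rewrite ler_sqrt ?ler_wpM2r // mulr_ge0 // (le_trans a0 ab).
by rewrite ler0_sqrtr ?sqrtr_ge0 // nmulr_rle0.
Qed.

Lemma two_sqrt_double_lt [R : rcfType] [x : R] :
  0 < x -> 2 * Num.sqrt (2 * x) < 3 * Num.sqrt x.
Proof.
move=> x0; apply: lt_of_sqr_lt; first by rewrite mulr_ge0 ?sqrtr_ge0.
have x0' := ltW x0; rewrite !exprMn !sqr_sqrtr ?mulr_ge0 //; lra.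
Qed.

Lemma ln_ge_half [R : realType] [y : R] : 2 <= y -> 1 / 2 <= ln y.
Proof.
move=> y2; have y0 : 0 < y by apply: lt_le_trans y2.
have : -1 < y^-1 - 1 by rewrite ltrBrDr addNr invr_gt0.
move/le_ln1Dx; rewrite addrCA subrr addr0 lnV ?posrE // => lny.
have : y^-1 <= 1 / 2 by rewrite -[1 / 2]invf_div divr1 lef_pV2 ?posrE.
lra.
Qed.

Lemma ln_ge1 [R : realType] [y : R] : 4 <= y -> 1 <= ln y.
Proof.
move=> y4; have : ln 4 <= ln y by rewrite ler_ln ?posrE //; lra.
have -> : 4 = 2 * 2 :> R by lra.
rewrite lnM ?posrE //.
have := @ln_ge_half R 2 (lexx _); lra.
Qed.

Lemma ln_ratio_nonincr_step [R : realType] [N d : R] [s : nat] :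
  1 <= N -> 0 < d <= 1 -> (4 <= s)%N ->
  ln (N * s.+1%:R / d) / s.+1%:R <= ln (N * s%:R / d) / s%:R.
Proof.
move=> N1 /andP[d0 d1] s4; have s4' : 4 <= s%:R :> R by rewrite (ler_nat R 4 s).
have s0 : 0 < s%:R :> R by lra.
have s1 : 0 < s.+1%:R :> R by rewrite ltr0n.
set u := N * s%:R / d.
have u4 : 4 <= u by rewrite /u ler_pdivlMr //; nra.
have -> : N * s.+1%:R / d = u * (1 + s%:R^-1).
  by rewrite /u -natr1; field; rewrite !lt0r_neq0.
rewrite lnM ?posrE; last 2 first.
- lra.
- by rewrite addr_gt0 ?invr_gt0.
have lnD : ln (1 + s%:R^-1) <= s%:R^-1 :> R.
  by apply: le_ln1Dx; rewrite (lt_trans (ltrN10 _)) ?invr_gt0.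
have := ln_ge1 u4; set L := ln u => L1.
apply: (le_trans (y := (L + s%:R^-1) / s.+1%:R)).
  by rewrite ler_pM2r ?invr_gt0 // lerD2l.
rewrite -subr_ge0.
have -> : L / s%:R - (L + s%:R^-1) / s.+1%:R = (L - 1) / (s%:R * s.+1%:R).
  by rewrite -natr1; field; apply/andP; split; apply/lt0r_neq0; rewrite // -?natr1.
by rewrite divr_ge0 ?subr_ge0 // mulr_ge0 // ltW.
Qed.

Lemma ln_ratio_nonincr [R : realType] [N d : R] [s1 s2 : nat] :
  1 <= N -> 0 < d <= 1 -> (4 <= s1 <= s2)%N ->
  ln (N * s2%:R / d) / s2%:R <= ln (N * s1%:R / d) / s1%:R.
Proof.
move=> N1 hd /andP[s14]; elim: s2 => [|s2 IH]; first by rewrite leqn0 => /eqP ->.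
rewrite leq_eqVlt => /orP[/eqP -> //|]; rewrite ltnS => s12.
exact: le_trans (ln_ratio_nonincr_step N1 hd (leq_trans s14 s12)) (IH s12).
Qed.

Lemma le_ln_of_lt_burnin [R : realType] [k N d s : R] :
  1 <= k -> 1 <= N -> 0 < d < 1 -> 2 <= s ->
  s < 16 * k * ln (8 * k * N / d) -> s <= 17 * k * ln (N * s / d).
Proof.
move=> k1 N1 /andP[d0 d1] s2 hs.
have c_half : 1 / 2 <= ln (N * s / d) by apply: ln_ge_half; rewrite ler_pdivlMr //; nra.
have [s8k|s8k] := leP (8 * k) s; last by nra.
have L0 : 0 <= ln (8 * k * N / d) by apply: ln_ge0; rewrite ler_pdivlMr //; nra.
have : ln (8 * k * N / d) <= ln (N * s / d).
  by rewrite ler_ln ?posrE ?divr_gt0 ?ler_pM2r ?invr_gt0 //; nra.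
nra.
Qed.

Lemma inv_min_sqrt_le [R : rcfType] [k c s : R] :
  1 <= k -> 0 < c -> 0 < s -> s <= 17 * k * c ->
  1 / Num.min (1 / (2 * k)) (Num.sqrt (2 * c / (2 * k * s))) <= 5 * k.
Proof.
move=> k1 c0 s0 hs; have b0 : 0 < Num.sqrt (2 * c / (2 * k * s)).
  by rewrite sqrtr_gt0 divr_gt0 //; nra.
have [_|lt_b] := leP (1 / (2 * k)) (Num.sqrt (2 * c / (2 * k * s))).
  by rewrite div1r invf_div divr1; lra.
rewrite ler_pdivrMr // mulrC; apply: le_of_sqr_le; first by rewrite mulr_ge0 ?ltW //; lra.
rewrite expr1n exprMn sqr_sqrtr; last by rewrite divr_ge0 //; nra.
have -> : 2 * c / (2 * k * s) * (5 * k) ^+ 2 = 25 * k * c / s.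
  by field; rewrite !lt0r_neq0 //; lra.
by rewrite ler_pdivlMr //; nra.
Qed.

Lemma Rintegral_le_bound {R : realType} {d : measure_display}
    {Omega : measurableType d} (P : probability Omega R) [f : Omega -> R] [M : R] :
  0 <= M -> (forall w, 0 <= f w <= M) -> \int[P]_w f w <= M.
Proof.
move=> M0 hf.
have f0 w : (0 <= (f w)%:E)%E by rewrite lee_fin; case/andP: (hf w).
have I0 : (0 <= \int[P]_(w in setT) (f w)%:E)%E by apply: integral_ge0.
have IM : (\int[P]_(w in setT) (f w)%:E <= M%:E)%E.
  rewrite ge0_integralTE //; apply: ge_ereal_sup => _ [h /= hf' <-].
  apply: (le_trans (le_sintegral P (f := h) (g := cst_nnsfun Omega (NngNum M0)) _)).
    move=> x; have := hf' x; rewrite lee_fin => /le_trans; apply.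
    by case/andP: (hf x).
  have := @sintegral_EFin_cst _ _ _ P setT (NngNum M0).
  rewrite patch_setT => ->; rewrite /= -[leRHS]mule1.
  by rewrite lee_wpmul2l ?lee_fin // sprobability_setT.
have Ifin : (\int[P]_(w in setT) (f w)%:E)%E \is a fin_num.
  by rewrite ge0_fin_numE // (le_lt_trans IM) // ltey.
by rewrite /Rintegral -lee_fin fineK.
Qed.

Lemma bigmax_seq_attained [R : realDomainType] [I : eqType] (r : seq I)
    (x : R) (F : I -> R) :
  \big[Num.max/x]_(i <- r) F i = x \/
  exists2 j, j \in r & \big[Num.max/x]_(i <- r) F i = F j.
Proof.
elim: r => [|i r IH]; first by left; rewrite big_nil.
rewrite big_cons; have [_|_] := leP (F i) (\big[Num.max/x]_(j <- r) F j).
  case: IH => [->|[j jr ->]]; first by left.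
  by right; exists j; rewrite // inE jr orbT.
by right; exists i; rewrite // inE eqxx.
Qed.

Lemma sqrt_double_lt_six [R : rcfType] [S V y : R] :
  0 < V -> 0 < y -> S <= 2 * V ->
  2 * Num.sqrt (S * y) <= 2 * Num.sqrt (2 * V * y) /\
  4 * Num.sqrt (2 * V * y) < 6 * Num.sqrt (V * y).
Proof.
move=> V0 y0 SV; split; first by rewrite ler_pM2l // sqrt_mulr_le // ltW.
by rewrite -mulrA; have := two_sqrt_double_lt (mulr_gt0 V0 y0); lra.
Qed.

Lemma lt_twice_of_variance_bound [R : realFieldType] [K B Ed E rho theta eps : R] :
  0 < eps < 1 -> theta * (1 - (1 + eps) / 2) = rho + 1 -> 0 <= K ->
  theta * K < B -> B = K + Ed -> Ed <= (1 + eps) * E + rho * K -> B < 2 * E.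
Proof.
move=> /andP[e0 e1] theta_eq K0 hB BE hEd.
have q0 : 0 < 1 - (1 + eps) / 2 by lra.
have : (rho + 1) * K < B * (1 - (1 + eps) / 2).
  by rewrite -theta_eq mulrAC ltr_pM2r.
nra.
Qed.

Lemma gap_sq_ge [R : realFieldType] [K B E D r C : R] :
  0 <= K -> 180 * K <= B -> B < 2 * E ->
  E <= Num.max (4 * K) (r * D ^+ 2 / (180 * C)) + K -> 0 < r -> 0 < C ->
  81 * B * (C / r) <= D ^+ 2.
Proof.
move=> K0 hB hE; rewrite -lerBlDr le_max => /orP[|hD] r0 C0; first by lra.
rewrite mulrA ler_pdivrMr // -(ler_pM2r C0) in hD *.
have -> : D ^+ 2 * r = r * D ^+ 2 / (180 * C) * 180 * C.
  by field; rewrite !lt0r_neq0.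
nra.
Qed.

Lemma six_sqrt_le_of_gap_sq [R : rcfType] [B y y' D S g : R] :
  0 < B -> 0 < y -> 0 <= y' <= y -> 0 <= D -> 81 * B * y <= D ^+ 2 ->
  S <= 2 * B -> D - 2 * Num.sqrt (S * y) <= g -> 6 * Num.sqrt (B * y') <= g.
Proof.
move=> B0 y0 /andP[y'0 y'y] D0 hD SB hg.
have By0 : 0 <= B * y by rewrite mulr_ge0 ?ltW.
have hD9 : 9 * Num.sqrt (B * y) <= D.
  by apply: le_of_sqr_le => //; rewrite exprMn sqr_sqrtr //; lra.
have [hS hS2] := sqrt_double_lt_six B0 y0 SB.
have hy' : Num.sqrt (B * y') <= Num.sqrt (B * y).
  by rewrite ler_sqrt // ler_wpM2l // ltW.
lra.
Qed.

Definition point_dist (R : realType) [Pi : finType] (a : Pi) : {ffun Pi -> R} :=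
  [ffun q => (q == a)%:R].

Lemma sum_point_dist [R : realType] [Pi : finType] (a : Pi) (F : Pi -> R) :
  \sum_q point_dist R a q * F q = F a.
Proof.
rewrite (bigD1 a) //= ffunE eqxx mul1r big1 ?addr0 // => q /negbTE qa.
by rewrite ffunE qa mul0r.
Qed.

Lemma is_dist_point_dist (R : realType) [Pi : finType] (a : Pi) :
  is_dist (point_dist R a).
Proof.
split=> [q|]; first by rewrite ffunE ler0n.
by have := sum_point_dist a (fun _ => 1 : R); under eq_bigr do rewrite mulr1.
Qed.

Lemma WP_point_dist [R : realType] [X : Type] [K : nat] [Pi : finType]
    (pol : Pi -> X -> 'I_K) (a : Pi) :
  WP pol (point_dist R a) = Wdet R pol a.
Proof.
apply/funext => x; apply/funext => b; rewrite /WP /Wdet big_mkcond /=.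
rewrite (bigD1 a) //= ffunE eqxx big1 ?addr0; first by case: (pol a x == b).
by move=> q /negbTE qa; rewrite ffunE qa; case: ifP.
Qed.

Section RandomizedUCB.
Context {R : realType} {X : Type} {K : nat} {Pi : finType} {pol : Pi -> X -> 'I_K}.
Context {d : measure_display} {Omega : measurableType d} {PD : probability Omega R}.
Context {xD : Omega -> X} {rD : Omega -> 'I_K -> R}.
Context {delta eps : R} {t0 : nat}.
Context {xs : nat -> X} {rs : nat -> 'I_K -> R} {acts : nat -> 'I_K} {ps : nat -> R}.
Context {Pt : nat -> {ffun Pi -> R}} {pit : nat -> Pi} {pst : Pi}.

Local Notation V := (Vt pol PD xD delta t0 Pt).
Local Notation Vb := (Vbar pol PD xD delta t0 Pt).
Local Notation C := (Ct Pi delta).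
Local Notation mu := (mut K Pi delta).
Local Notation eta s a := (eta_hat xs rs acts ps s (Wdet R pol a)).
Local Notation Delta s a := (Delta_hat pol xs rs acts ps pit s (Wdet R pol a)).
Local Notation reward := (etaD pol PD xD rD).

Let rho := 7500 / eps ^+ 3.
Let theta := (rho + 1) / (1 - (1 + eps) / 2).
Let T1 := Num.ceil (16 * K%:R * ln (8 * K%:R * #|Pi|%:R / delta)).

Hypotheses (hK : (0 < K)%N) (hdelta : 0 < delta < 1) (heps : 0 < eps < 1).
Hypothesis ht01 : (1 <= t0)%N.
Hypothesis hpit : forall t p, eta t p <= eta t (pit t).
Hypothesis hPdist : forall t, (1 <= t)%N -> is_dist (Pt t).
Hypothesis hPfeas : forall t, (1 <= t)%N ->
  constraint_ok pol xs rs acts ps pit delta t K%:R (Pt t).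
Hypothesis hcond1 : forall p t, T1 <= t%:Z ->
  ED PD xD (invW pol delta t (Pt t) p)
    <= (1 + eps) * Eh xs t.-1 (invW pol delta t (Pt t) p) + rho * K%:R.
Hypothesis hcond2 : forall p p' t, (t0 <= t)%N ->
  `|(eta t p - eta t p') - (reward p - reward p')|
    <= 2 * Num.sqrt ((Vb t p + Vb t p') * C t / t%:R).
Hypothesis hpst : forall a, reward a <= reward pst.

Lemma theta_eq : theta * (1 - (1 + eps) / 2) = rho + 1.
Proof. by have [_ e1] := andP heps; rewrite /theta divfK // lt0r_neq0 //; lra. Qed.

Lemma theta_ge : 180 <= theta.
Proof.
have [e0 e1] := andP heps.
have rho_ge : 7500 <= rho.
  rewrite /rho ler_pdivlMr ?exprn_gt0 //.
  have : eps ^+ 3 <= 1 by rewrite exprn_ile1 // ltW.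
  lra.
by rewrite /theta ler_pdivlMr; lra.
Qed.

Lemma K_ge1 : 1 <= K%:R :> R.
Proof. by rewrite (ler_nat R 1). Qed.

Lemma card_Pi_ge1 : 1 <= #|Pi|%:R :> R.
Proof. by rewrite (ler_nat R 1); apply/card_gt0P; exists pst. Qed.

Lemma Ct_gt0 s : (1 <= s)%N -> 0 < C s.
Proof.
move=> s1; have [d0 d1] := andP hdelta; have N1 := card_Pi_ge1.
have s1R : 1 <= s%:R :> R by rewrite (ler_nat R 1).
by rewrite /Ct mulr_gt0 // ln_gt0 // ltr_pdivlMr // mul1r; nra.
Qed.

Lemma Ct_div_gt0 s : (1 <= s)%N -> 0 < C s / s%:R.
Proof. by move=> s1; rewrite divr_gt0 ?Ct_gt0 ?ltr0n. Qed.

Lemma Ct_div_nonincr s1 s2 : (4 <= s1 <= s2)%N -> C s2 / s2%:R <= C s1 / s1%:R.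
Proof.
have [d0 d1] := andP hdelta.
move=> hs; rewrite /Ct -[_ / s2%:R]mulrA -[_ / s1%:R]mulrA ler_pM2l //.
by apply: ln_ratio_nonincr card_Pi_ge1 _ hs; rewrite d0 ltW.
Qed.

Lemma burnin_ge8 s : T1 <= s%:Z -> (8 <= s)%N.
Proof.
have [d0 d1] := andP hdelta; have k1 := K_ge1; have N1 := card_Pi_ge1.
rewrite /T1 ceil_le_int -pmulrn => hs.
have : 1 / 2 <= ln (8 * K%:R * #|Pi|%:R / delta).
  by apply: ln_ge_half; rewrite ler_pdivlMr //; nra.
by rewrite -(ler_nat R); nra.
Qed.

Lemma mut_gt0 s : (1 <= s)%N -> 0 < mu s.
Proof.
move=> s1; rewrite /mut lt_min divr_gt0 ?mulr_gt0 ?ltr0n //=.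
by rewrite sqrtr_gt0 divr_gt0 ?Ct_gt0 // !mulr_gt0 ?ltr0n.
Qed.

Lemma inv_mut_le s : (2 <= s)%N -> ~ T1 <= s%:Z -> 1 / mu s <= 5 * K%:R.
Proof.
move=> s2 hs; have [d0 d1] := andP hdelta.
have s2R : 2 <= s%:R :> R by rewrite (ler_nat R 2).
apply: inv_min_sqrt_le; rewrite ?K_ge1 ?ltr0n ?(leq_trans _ s2) //.
  by rewrite ln_gt0 // ltr_pdivlMr // mul1r; have := card_Pi_ge1; nra.
apply: le_ln_of_lt_burnin; rewrite ?K_ge1 ?card_Pi_ge1 ?d0 //.
by rewrite ltNge; apply/negP => hle; apply: hs; rewrite /T1 ceil_le_int -pmulrn.
Qed.

Lemma ED_invW_le s a : (1 <= s)%N -> ED PD xD (invW pol delta s (Pt s) a) <= 1 / mu s.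
Proof.
move=> s1; have mu0 := mut_gt0 _ s1.
have Kmu : 0 <= 1 - K%:R * mu s.
  have : K%:R * mu s <= K%:R * (1 / (2 * K%:R)).
    by rewrite ler_pM2l ?ltr0n // /mut ge_min lexx.
  have -> : K%:R * (1 / (2 * K%:R)) = 1 / 2 :> R by field; rewrite pnatr_eq0 -lt0n.
  lra.
apply: Rintegral_le_bound => [|w]; first by rewrite divr_ge0 ?ltW.
have W0 : 0 <= WP pol (Pt s) (xD w) (pol a (xD w)).
  by apply: sumr_ge0 => q _; case: (hPdist _ s1).
have den : mu s <= (1 - K%:R * mu s) * WP pol (Pt s) (xD w) (pol a (xD w)) + mu s.
  by rewrite lerDr mulr_ge0.
rewrite /invW divr_ge0 ?(le_trans (ltW mu0) den) //=.
by rewrite !div1r lef_pV2 ?posrE // (lt_le_trans mu0 den).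
Qed.

Lemma Vt_gt_theta s a : theta * K%:R < V s a -> (t0 < s)%N /\ T1 <= s%:Z.
Proof.
have th := theta_ge; have k1 := K_ge1.
rewrite /Vt; case: leqP => [_|t0s hV]; first by rewrite ltNge ler_peMl //; lra.
split=> //; apply/negP => /negP/negP hs; move: hV; apply/negP; rewrite -leNgt.
have s1 : (1 <= s)%N by apply: leq_trans t0s.
have := ED_invW_le s a s1; have := inv_mut_le s (leq_ltn_trans ht01 t0s) hs.
by nra.
Qed.

Lemma K_le_Vbar s a : K%:R <= Vb s a.
Proof. by rewrite /Vbar bigmax_idl le_max /Vt ht01 lexx. Qed.

Lemma Vbar_gt0 s a : 0 < Vb s a.
Proof. by apply: lt_le_trans (K_le_Vbar s a); rewrite ltr0n. Qed.

Lemma Vbar_nondecr s1 s2 a : (s1 <= s2)%N -> Vb s1 a <= Vb s2 a.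
Proof. by move=> s12; apply: le_bigmax_nat. Qed.

Lemma Vbar_gt_theta s a : theta * K%:R < Vb s a ->
  exists tau, [/\ (tau <= s)%N, Vb s a = V tau a, (t0 < tau)%N & T1 <= tau%:Z].
Proof.
have attained : exists2 tau, (1 <= tau <= maxn 1 s)%N & Vb s a = V tau a.
  rewrite /Vbar; case: (bigmax_seq_attained (index_iota 1 s.+1) (V 1 a) (V^~ a)) => [->|[j]].
    by exists 1%N; rewrite ?leq_maxl.
  by rewrite mem_index_iota ltnS => /andP[j1 js] ->; exists j; rewrite ?j1 ?leq_max ?js ?orbT.
case: attained => tau /andP[_ taus] -> /Vt_gt_theta[t0tau T1tau]; exists tau; split=> //.
by move: taus t0tau ht01; lia.
Qed.

Lemma reward_gap_ge s a b : (t0 <= s)%N ->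
  eta s a - eta s b - 2 * Num.sqrt ((Vb s a + Vb s b) * (C s / s%:R))
    <= reward a - reward b.
Proof.
move=> t0s; have := hcond2 a b _ t0s; rewrite ler_norml mulrA => /andP[_].
by lra.
Qed.

Lemma Eh_invW_le s a : (1 <= s)%N ->
  Eh xs s.-1 (invW pol delta s (Pt s) a)
    <= Num.max (4 * K%:R) (s.-1%:R * Delta s.-1 a ^+ 2 / (180 * C s.-1)) + K%:R.
Proof.
move=> s1; have := hPfeas _ s1 _ (is_dist_point_dist R a).
by rewrite sum_point_dist WP_point_dist.
Qed.

Lemma Delta_sq_ge tau a : theta * K%:R < V tau a -> (t0 < tau)%N -> T1 <= tau%:Z ->
  81 * V tau a * (C tau.-1 / tau.-1%:R) <= Delta tau.-1 a ^+ 2.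
Proof.
move=> hV t0tau T1tau; have tau8 := burnin_ge8 _ T1tau.
have [th k1] := (theta_ge, K_ge1).
apply: (@gap_sq_ge _ K%:R _ (Eh xs tau.-1 (invW pol delta tau (Pt tau) a))).
- by rewrite ler0n.
- by nra.
- apply: (lt_twice_of_variance_bound heps theta_eq _ hV _ (hcond1 a _ T1tau)).
    by rewrite ler0n.
  by rewrite /Vt leqNgt t0tau.
- by apply: Eh_invW_le; apply: leq_trans tau8.
- by rewrite ltr0n; lia.
- by apply: Ct_gt0; lia.
Qed.

Definition regret_bound s := forall a, theta * K%:R < Vb s a ->
  6 * Num.sqrt (Vb s a * (C s / s%:R)) <= reward pst - reward a.

Lemma Vbar_opt_le s : (1 <= s)%N -> regret_bound s -> Vb s pst <= theta * K%:R.
Proof.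
move=> s1 hs; rewrite leNgt; apply/negP => /hs; rewrite subrr.
by apply/negP; rewrite -ltNge mulr_gt0 // sqrtr_gt0 mulr_gt0 ?Vbar_gt0 ?Ct_div_gt0.
Qed.

Lemma Vbar_pit_le s : (t0 <= s)%N -> regret_bound s -> Vb s (pit s) <= theta * K%:R.
Proof.
move=> t0s hs; have s1 := leq_trans ht01 t0s.
rewrite leNgt; apply/negP => hV; have regret := hs _ hV.
have gap := reward_gap_ge s (pit s) pst t0s; have emp := hpit s pst.
have opt := Vbar_opt_le s s1 hs.
have [] := sqrt_double_lt_six (Vbar_gt0 s (pit s)) (Ct_div_gt0 s s1)
  (S := Vb s (pit s) + Vb s pst); first by lra.
by have := sqrtr_ge0 (Vb s (pit s) * (C s / s%:R)); lra.
Qed.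

Lemma regret_bound_all s : regret_bound s.
Proof.
elim/ltn_ind: s => s IH a hV.
have [tau [taus eVa t0tau T1tau]] := Vbar_gt_theta s a hV.
rewrite eVa in hV *; set r := tau.-1.
have tau8 := burnin_ge8 _ T1tau.
have [r1 r4 r_lt_s t0r] : [/\ (1 <= r)%N, (4 <= r)%N, (r < s)%N & (t0 <= r)%N].
  by rewrite /r; split; lia.
have sigma_le := Vbar_pit_le r t0r (IH r r_lt_s).
have a_le : Vb r a <= V tau a by rewrite -eVa Vbar_nondecr // ltnW.
have gap := reward_gap_ge r (pit r) a t0r; have opt := hpst (pit r).
apply: (six_sqrt_le_of_gap_sq _ (Ct_div_gt0 r r1) _ _
          (Delta_sq_ge tau a hV t0tau T1tau) (S := Vb r (pit r) + Vb r a)).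
- by rewrite -eVa Vbar_gt0.
- by rewrite ltW ?Ct_div_gt0 ?Ct_div_nonincr ?r4 ?(ltnW r_lt_s) //; lia.
- by rewrite subr_ge0 hpit.
- by lra.
- by rewrite /Delta_hat; lra.
Qed.

Lemma Delta_gt_of_Vbar_gt t a : theta * K%:R < Vb t a ->
  2 * Num.sqrt (2 * Vb t a * C t / t%:R) < Delta t a.
Proof.
move=> hV; have regret := regret_bound_all t a hV.
have [tau [taut _ t0tau _]] := Vbar_gt_theta t a hV.
have [t1 t0t] : (1 <= t)%N /\ (t0 <= t)%N by split; lia.
have opt := Vbar_opt_le t t1 (regret_bound_all t).
have gap := reward_gap_ge t a pst t0t; have emp := hpit t pst.
have [] := sqrt_double_lt_six (Vbar_gt0 t a) (Ct_div_gt0 t t1)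
  (S := Vb t a + Vb t pst); first by lra.
by rewrite -[2 * _ * _ / _]mulrA /Delta_hat; lra.
Qed.

End RandomizedUCB.

Theorem lemma14
  (R : realType) (X : Type) (K : nat) (Pi : finType) (pol : Pi -> X -> 'I_K)
  (d : measure_display) (Omega : measurableType d) (PD : probability Omega R)
  (xD : Omega -> X) (rD : Omega -> 'I_K -> R)
  (delta eps c : R) (t0 : nat)
  (xs : nat -> X) (rs : nat -> 'I_K -> R) (acts : nat -> 'I_K) (ps : nat -> R)
  (Pt : nat -> {ffun Pi -> R}) (pit : nat -> Pi)
  (hK : (0 < K)%N)
  (hpol : injective pol)
  (hdelta : 0 < delta < 1)
  (hrD : forall w a, 0 <= rD w a <= 1)
  (hrs : forall i a, (1 <= i)%N -> 0 <= rs i a <= 1)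
  (hpit : forall t p, eta_hat xs rs acts ps t (Wdet R pol p)
                        <= eta_hat xs rs acts ps t (Wdet R pol (pit t)))
  (hPdist : forall t, (1 <= t)%N -> is_dist (Pt t))
  (hPfeas : forall t, (1 <= t)%N ->
     constraint_ok pol xs rs acts ps pit delta t K%:R (Pt t))
  (hPopt : forall t, (1 <= t)%N -> forall P' : {ffun Pi -> R}, is_dist P' ->
     constraint_ok pol xs rs acts ps pit delta t 0 P' ->
     objective pol xs rs acts ps pit t (Pt t)
       <= objective pol xs rs acts ps pit t P'
          + c * Num.sqrt (K%:R * Ct Pi delta t / t%:R))
  (hps : forall t, (1 <= t)%N ->
     ps t = (1 - K%:R * mut K Pi delta t) * WP pol (Pt t) (xs t) (acts t)
            + mut K Pi delta t)
  (ht0 : (1 <= t0)%N /\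
     mut K Pi delta t0 = Num.sqrt (Ct Pi delta t0 / (2 * K%:R * t0%:R)) /\
     forall s, (1 <= s < t0)%N ->
       mut K Pi delta s <> Num.sqrt (Ct Pi delta s / (2 * K%:R * s%:R)))
  (heps : 0 < eps < 1)
  (* Condition 1 (i) *)
  (hcond1 : forall p t,
     (Num.ceil (16 * K%:R * ln (8 * K%:R * #|Pi|%:R / delta)) <= t%:Z) ->
     ED PD xD (invW pol delta t (Pt t) p)
       <= (1 + eps) * Eh xs t.-1 (invW pol delta t (Pt t) p)
          + 7500 / eps ^+ 3 * K%:R)
  (* Condition 1 (ii) *)
  (hcond2 : forall p p' t, (t0 <= t)%N ->
     `|(eta_hat xs rs acts ps t (Wdet R pol p) - eta_hat xs rs acts ps t (Wdet R pol p'))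
        - (etaD pol PD xD rD p - etaD pol PD xD rD p')|
       <= 2 * Num.sqrt ((Vbar pol PD xD delta t0 Pt t p + Vbar pol PD xD delta t0 Pt t p')
                        * Ct Pi delta t / t%:R))
  (p : Pi) (t : nat)
  (ht : Num.ceil (16 * K%:R * ln (8 * K%:R * #|Pi|%:R / delta)) <= t%:Z) :
  let rho := 7500 / eps ^+ 3 in
  let theta := (rho + 1) / (1 - (1 + eps) / 2) in
  theta * K%:R < Vbar pol PD xD delta t0 Pt t p ->
  Delta_hat pol xs rs acts ps pit t (Wdet R pol p)
    > 2 * Num.sqrt (2 * Vbar pol PD xD delta t0 Pt t p * Ct Pi delta t / t%:R).
Proof.
move=> rho theta hV; have [t01 _] := ht0.
have [pst _ hpst] := @arg_maxP _ R Pi p xpredT (etaD pol PD xD rD) isT.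
exact: Delta_gt_of_Vbar_gt hK hdelta heps t01 hpit hPdist hPfeas hcond1 hcond2
  (fun a => hpst a isT) t p hV.
Qed.
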